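(* Let $\mathfrak{g}=V\rtimes\mathfrak{h}$ with $V$ an abelian ideal and $\mathfrak{h}$ a complementary subalgebra, let $\zeta\in\mathcal{Q}_0(\mathfrak{g})$ be a continuous normalized Lie quasi-state and let $X\in\mathfrak{h}$. Then the function $\zeta_X:V\to\mathbb{R}$, $\zeta_X(v)=\zeta(v,X)$, satisfies $\lim_{v\to\infty}\zeta_X(v)/\|v\|=0$ for any norm on $V$.
   Context: A Lie quasi-state is $\zeta:\mathfrak{g}\to\mathbb{R}$ with $\zeta(aX+bY)=a\zeta(X)+b\zeta(Y)$ for all $a,b\in\mathbb{R}$ and commuting $X,Y$. It is normalized if $\zeta(v,0)=\zeta(0,X)=0$ for all $v\in V$, $X\in\mathfrak{h}$; $\mathcal{Q}_0(\mathfrak{g})$ denotes the continuous normalized Lie quasi-states. *)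

From Stdlib Require Fin.
From Stdlib Require Import Reals.
Open Scope R_scope.

(* Coordinates: V = R^n, h = R^m, vectors as functions on Fin.t n. *)
Definition vec (n : nat) := Fin.t n -> R.
Definition vzero {n} : vec n := fun _ => 0.
Definition vadd {n} (u w : vec n) : vec n := fun i => u i + w i.
Definition vscal {n} (a : R) (u : vec n) : vec n := fun i => a * u i.
Definition veq {n} (u w : vec n) : Prop := forall i, u i = w i.

(* A finite-dimensional real Lie algebra g = V ⋊ h: h = R^m with a Lie
   bracket hbr, acting on the abelian ideal V = R^n via a representation rho. *)
Record SemidirectLie (n m : nat) := {
  hbr : vec m -> vec m -> vec m;
  rho : vec m -> vec n -> vec n;
  hbr_linl : forall a b X Y Z,
      veq (hbr (vadd (vscal a X) (vscal b Y)) Z) (vadd (vscal a (hbr X Z)) (vscal b (hbr Y Z)));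
  hbr_linr : forall a b X Y Z,
      veq (hbr Z (vadd (vscal a X) (vscal b Y))) (vadd (vscal a (hbr Z X)) (vscal b (hbr Z Y)));
  hbr_alt : forall X, veq (hbr X X) vzero;
  hbr_jacobi : forall X Y Z,
      veq (vadd (hbr X (hbr Y Z)) (vadd (hbr Y (hbr Z X)) (hbr Z (hbr X Y)))) vzero;
  rho_linl : forall a b X Y v,
      veq (rho (vadd (vscal a X) (vscal b Y)) v) (vadd (vscal a (rho X v)) (vscal b (rho Y v)));
  rho_linr : forall a b X v w,
      veq (rho X (vadd (vscal a v) (vscal b w))) (vadd (vscal a (rho X v)) (vscal b (rho X w)));
  rho_hom : forall X Y v,
      veq (rho (hbr X Y) v) (vadd (rho X (rho Y v)) (vscal (-1) (rho Y (rho X v))))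
}.
Arguments hbr {n m} s _ _.
Arguments rho {n m} s _ _.

Definition gel (n m : nat) := (vec n * vec m)%type.

Definition gadd {n m} (x y : gel n m) : gel n m := (vadd (fst x) (fst y), vadd (snd x) (snd y)).
Definition gscal {n m} (a : R) (x : gel n m) : gel n m := (vscal a (fst x), vscal a (snd x)).

Definition gbr {n m} (s : SemidirectLie n m) (x y : gel n m) : gel n m :=
  (vadd (rho s (snd x) (fst y)) (vscal (-1) (rho s (snd y) (fst x))), hbr s (snd x) (snd y)).

Definition gcommute {n m} (s : SemidirectLie n m) (x y : gel n m) : Prop :=
  veq (fst (gbr s x y)) vzero /\ veq (snd (gbr s x y)) vzero.

Definition lie_quasi_state {n m} (s : SemidirectLie n m) (zeta : gel n m -> R) : Prop :=
  forall (a b : R) (x y : gel n m), gcommute s x y ->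
    zeta (gadd (gscal a x) (gscal b y)) = a * zeta x + b * zeta y.

Definition normalized {n m} (zeta : gel n m -> R) : Prop :=
  (forall v : vec n, zeta (v, vzero) = 0) /\ (forall X : vec m, zeta (vzero, X) = 0).

Definition g_continuous {n m} (zeta : gel n m -> R) : Prop :=
  forall (x : gel n m) (eps : R), 0 < eps -> exists delta, 0 < delta /\
    forall y : gel n m,
      (forall i, Rabs (fst y i - fst x i) < delta) ->
      (forall j, Rabs (snd y j - snd x j) < delta) ->
      Rabs (zeta y - zeta x) < eps.

Definition is_norm {n} (N : vec n -> R) : Prop :=
  (forall v, 0 <= N v) /\
  (forall v, N v = 0 -> veq v vzero) /\
  (forall a v, N (vscal a v) = Rabs a * N v) /\
  (forall v w, N (vadd v w) <= N v + N w).

Definition lim_ratio_infty_zero {n} (N : vec n -> R) (f : vec n -> R) : Prop :=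
  forall eps, 0 < eps -> exists M, forall v, M < N v -> Rabs (f v / N v) < eps.

From Stdlib Require Fin.
From Stdlib Require Import Reals Lra Lia Classical ClassicalEpsilon FunctionalExtensionality.
Open Scope R_scope.

(* Write [(v, X) = t (v/t, X/t)] with [t] the sup norm of [v]; homogeneity of [zeta] on the
   commuting pair [x, x] gives [zeta (v, X) = t zeta (v/t, X/t)].  As [N v -> oo], [t -> oo], so
   [X/t -> 0] while [v/t] stays in the unit cube.  Since [zeta] is continuous and vanishes on
   [V x {0}], compactness of the cube makes [zeta] uniformly small on a thin neighbourhood of
   [cube x {0}]; together with the equivalence of [N] with the sup norm, [zeta (v, X) = o(N v)]. *)

Definition strictly_increasing (phi : nat -> nat) : Prop :=
  forall k, (phi k < phi (S k))%nat.

Lemma strictly_increasing_lt phi :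
  strictly_increasing phi -> forall a b, (a < b)%nat -> (phi a < phi b)%nat.
Proof.
  intros Hphi a b Hab; induction Hab as [|b _ IH].
  - apply Hphi.
  - specialize (Hphi b); lia.
Qed.

Lemma strictly_increasing_ge phi : strictly_increasing phi -> forall k, (k <= phi k)%nat.
Proof. intros Hphi k; induction k as [|k IH]; [lia|specialize (Hphi k); lia]. Qed.

Lemma strictly_increasing_comp phi psi :
  strictly_increasing phi -> strictly_increasing psi ->
  strictly_increasing (fun k => phi (psi k)).
Proof. intros Hphi Hpsi k; apply strictly_increasing_lt, Hpsi; exact Hphi. Qed.

(* [g k N] is meant to be an index [>= N] at distance [< 1/(k+1)] from a cluster point. *)
Fixpoint chain_indices (g : nat -> nat -> nat) (k : nat) : nat :=
  match k with O => g O O | S k' => g k (S (chain_indices g k')) end.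

Lemma Rinv_INR_S_le_lt (eps : R) (K k : nat) :
  (0 < K)%nat -> / INR K < eps -> (K <= k)%nat -> / INR (S k) < eps.
Proof.
  intros HK Heps Hk; eapply Rle_lt_trans; [|exact Heps].
  apply Rinv_le_contravar; [apply lt_0_INR; exact HK|apply le_INR; lia].
Qed.

Lemma bounded_seq_subseq_cv (u : nat -> R) (B : R) :
  (forall k, Rabs (u k) <= B) ->
  exists phi l, strictly_increasing phi /\ Un_cv (fun k => u (phi k)) l.
Proof.
  intro HB.
  destruct (Bolzano_Weierstrass u (fun c => -B <= c <= B) (compact_P3 _ _)) as [l Hl].
  { intro k; specialize (HB k); revert HB; unfold Rabs; destruct (Rcase_abs (u k)); lra. }
  assert (Hnear : forall k N : nat, {p | (N <= p)%nat /\ Rabs (u p - l) < / INR (S k)}).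
  { intros k N; apply constructive_indefinite_description.
    assert (Hr : 0 < / INR (S k)) by (apply Rinv_0_lt_compat, lt_0_INR; lia).
    destruct (Hl (disc l (mkposreal _ Hr)) N) as [p Hp].
    - exists (mkposreal _ Hr); intros y Hy; exact Hy.
    - exists p; exact Hp. }
  set (g := fun k N => proj1_sig (Hnear k N)).
  assert (Hg : forall k N, (N <= g k N)%nat /\ Rabs (u (g k N) - l) < / INR (S k))
    by (intros k N; exact (proj2_sig (Hnear k N))).
  exists (chain_indices g), l; split.
  - intro k; apply (Hg (S k) (S (chain_indices g k))).
  - intros eps Heps; destruct (archimed_cor1 eps Heps) as [K [HK HK0]].
    exists K; intros k Hk; unfold R_dist.
    eapply Rlt_trans; [|exact (Rinv_INR_S_le_lt eps K k HK0 HK Hk)].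
    destruct k; apply Hg.
Qed.

Definition vec_cv {n} (u : nat -> vec n) (l : vec n) : Prop :=
  forall eps, 0 < eps -> exists K, forall k, (K <= k)%nat -> forall i, Rabs (u k i - l i) < eps.

Definition vcons {n} (a : R) (w : vec n) : vec (S n) :=
  fun i => Fin.caseS' i (fun _ => R) a w.

Lemma vcons_eta {n} (v : vec (S n)) : v = vcons (v Fin.F1) (fun i => v (Fin.FS i)).
Proof.
  extensionality i; unfold vcons.
  apply (Fin.caseS' i (fun j => v j = Fin.caseS' j (fun _ => R) _ _)); reflexivity.
Qed.

Lemma bounded_vec_seq_subseq_cv n (u : nat -> vec n) (B : R) :
  (forall k i, Rabs (u k i) <= B) ->
  exists phi l, strictly_increasing phi /\ vec_cv (fun k => u (phi k)) l.
Proof.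
  revert u; induction n as [|n IH]; intros u HB.
  - exists (fun k => k), vzero; split; [intro k; lia|].
    intros eps _; exists O; intros k _ i; exact (Fin.case0 (fun j => Rabs (u k j - vzero j) < eps) i).
  - destruct (bounded_seq_subseq_cv (fun k => u k Fin.F1) B) as [phi [a [Hphi Ha]]].
    { intro k; apply HB. }
    destruct (IH (fun k i => u (phi k) (Fin.FS i))) as [psi [w [Hpsi Hw]]].
    { intros k i; apply HB. }
    exists (fun k => phi (psi k)), (vcons a w); split.
    + exact (strictly_increasing_comp _ _ Hphi Hpsi).
    + intros eps Heps; destruct (Ha eps Heps) as [K1 HK1]; destruct (Hw eps Heps) as [K2 HK2].
      exists (max K1 K2); intros k Hk i; rewrite (vcons_eta (u (phi (psi k)))).
      apply (Fin.caseS' i (fun j => Rabs (vcons _ _ j - vcons a w j) < eps)); simpl.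
      * apply HK1; pose proof (strictly_increasing_ge _ Hpsi k); lia.
      * intro j; apply (HK2 k); lia.
Qed.

Fixpoint vsup (n : nat) : vec n -> R :=
  match n return vec n -> R with
  | O => fun _ => 0
  | S n' => fun v => Rmax (Rabs (v Fin.F1)) (vsup n' (fun i => v (Fin.FS i)))
  end.

Lemma Rabs_le_vsup n (v : vec n) i : Rabs (v i) <= vsup n v.
Proof.
  revert v; induction n as [|n IH]; intro v.
  - exact (Fin.case0 (fun j => Rabs (v j) <= vsup 0 v) i).
  - apply (Fin.caseS' i (fun j => Rabs (v j) <= vsup (S n) v)); simpl.
    + apply Rmax_l.
    + intro j; eapply Rle_trans; [apply (IH _ (fun i => v (Fin.FS i)))|apply Rmax_r].
Qed.

Lemma vsup_le n (v : vec n) c : 0 <= c -> (forall i, Rabs (v i) <= c) -> vsup n v <= c.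
Proof.
  revert v; induction n as [|n IH]; intros v Hc Hv; simpl; [exact Hc|].
  apply Rmax_lub; [apply Hv|apply IH; [exact Hc|intro; apply Hv]].
Qed.

Lemma vsup_ge0 n (v : vec n) : 0 <= vsup n v.
Proof. destruct n; simpl; [lra|eapply Rle_trans; [apply Rabs_pos|apply Rmax_l]]. Qed.

Lemma vsup_scal n (a : R) (v : vec n) : vsup n (vscal a v) = Rabs a * vsup n v.
Proof.
  revert v; induction n as [|n IH]; intro v; simpl; [ring|].
  rewrite <- RmaxRmult by apply Rabs_pos.
  rewrite <- (IH (fun i => v (Fin.FS i))); unfold vscal; rewrite Rabs_mult; reflexivity.
Qed.

(* The upper bound holds for any subadditive, absolutely homogeneous [N >= 0]; dropping
   definiteness is what lets the induction pass to the restriction of [N] to [0 x R^n]. *)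
Lemma norm_le_vsup n (N : vec n -> R) :
  (forall v, 0 <= N v) -> (forall a v, N (vscal a v) = Rabs a * N v) ->
  (forall v w, N (vadd v w) <= N v + N w) ->
  exists C, 0 <= C /\ forall v, N v <= C * vsup n v.
Proof.
  revert N; induction n as [|n IH]; intros N N0 Nscal Nadd.
  - exists 0; split; [lra|intro v].
    assert (E : v = vscal 0 v)
      by (extensionality i; exact (Fin.case0 (fun j => v j = vscal 0 v j) i)).
    rewrite E, Nscal, Rabs_R0; lra.
  - destruct (IH (fun w => N (vcons 0 w))) as [C [HC0 HC]].
    + intro; apply N0.
    + intros a w; rewrite <- Nscal; f_equal; extensionality i; unfold vcons, vscal.
      apply (Fin.caseS' i (fun j => Fin.caseS' j _ 0 (vscal a w) = a * Fin.caseS' j _ 0 w));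
        simpl; intros; [ring|reflexivity].
    + intros v w; rewrite <- Nadd; right; f_equal; extensionality i; unfold vcons, vadd.
      apply (Fin.caseS' i (fun j => Fin.caseS' j _ 0 (vadd v w) = Fin.caseS' j _ 0 v + Fin.caseS' j _ 0 w));
        simpl; intros; [ring|reflexivity].
    + set (e := vcons 1 (@vzero n)); exists (N e + C); split; [pose proof (N0 e); lra|].
      intro v; set (t := fun i => v (Fin.FS i)).
      assert (E : v = vadd (vscal (v Fin.F1) e) (vcons 0 t)).
      { rewrite (vcons_eta v) at 1; extensionality i; unfold e, vcons, vadd, vscal, vzero.
        apply (Fin.caseS' i (fun j => Fin.caseS' j _ _ _ = _ * Fin.caseS' j _ 1 _ + Fin.caseS' j _ 0 t));
          simpl; intros; unfold t; ring. }
      rewrite E at 1; eapply Rle_trans; [apply Nadd|rewrite Nscal].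
      specialize (HC t); pose proof (N0 e); pose proof (Rabs_pos (v Fin.F1)).
      change (vsup (S n) v) with (Rmax (Rabs (v Fin.F1)) (vsup n t)).
      pose proof (Rmax_l (Rabs (v Fin.F1)) (vsup n t)); pose proof (Rmax_r (Rabs (v Fin.F1)) (vsup n t)).
      nra.
Qed.

Section NormEquivalence.

Variables (n : nat) (N : vec n -> R).
Hypothesis HN : is_norm N.

Lemma norm_sub_le u w : N u - N w <= N (fun i => u i - w i).
Proof.
  assert (E : u = vadd w (fun i => u i - w i)) by (extensionality i; unfold vadd; ring).
  pose proof (proj2 (proj2 (proj2 HN)) w (fun i => u i - w i)) as Hadd.
  rewrite <- E in Hadd; lra.
Qed.

Lemma norm_vec_cv (w : nat -> vec n) (l : vec n) :
  vec_cv w l -> Un_cv (fun k => N (w k)) (N l).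
Proof.
  destruct HN as [N0 [_ [Nscal Nadd]]].
  destruct (norm_le_vsup n N N0 Nscal Nadd) as [C [HC0 HC]].
  intros Hw eps Heps.
  destruct (Hw (eps / (C + 1))) as [K HK]; [apply Rdiv_lt_0_compat; lra|].
  exists K; intros k Hk; unfold R_dist.
  assert (Hd : forall a b : vec n, (forall i, Rabs (a i - b i) < eps / (C + 1)) ->
                 N a - N b < eps).
  { intros a b Hab; eapply Rle_lt_trans; [apply norm_sub_le|].
    eapply Rle_lt_trans; [apply HC|].
    assert (Hs : vsup n (fun i => a i - b i) <= eps / (C + 1))
      by (apply vsup_le; [left; apply Rdiv_lt_0_compat; lra|intro; left; apply Hab]).
    apply Rle_lt_trans with (C * (eps / (C + 1))); [apply Rmult_le_compat_l; lra|].
    apply Rmult_lt_reg_l with (C + 1); [lra|].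
    replace ((C + 1) * (C * (eps / (C + 1)))) with (C * eps) by (field; lra); nra. }
  apply Rabs_def1.
  - apply Hd, HK, Hk.
  - assert (N l - N (w k) < eps); [|lra].
    apply Hd; intro i; rewrite Rabs_minus_sym; apply HK, Hk.
Qed.

Lemma vsup_le_norm : exists c, 0 < c /\ forall v, c * vsup n v <= N v.
Proof.
  destruct HN as [N0 [Ndef [Nscal _]]].
  apply NNPP; intro Hno.
  assert (Hsmall : forall k : nat, {u | vsup n u = 1 /\ N u < / INR (S k)}).
  { intro k; apply constructive_indefinite_description; apply NNPP; intro Hk; apply Hno.
    assert (Hk0 : 0 < / INR (S k)) by (apply Rinv_0_lt_compat, lt_0_INR; lia).
    exists (/ INR (S k)); split; [exact Hk0|intro v].
    apply Rnot_lt_le; intro Hv; apply Hk.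
    set (s := vsup n v) in Hv.
    assert (Hs : 0 < s) by (pose proof (N0 v); pose proof (vsup_ge0 n v) as Hs0; fold s in Hs0; nra).
    exists (vscal (/ s) v); rewrite vsup_scal, Nscal, Rabs_pos_eq by (left; apply Rinv_0_lt_compat, Hs).
    fold s; split; [field; lra|].
    apply Rmult_lt_reg_l with s; [exact Hs|].
    replace (s * (/ s * N v)) with (N v) by (field; lra); lra. }
  set (u := fun k => proj1_sig (Hsmall k)).
  assert (Hu : forall k, vsup n (u k) = 1 /\ N (u k) < / INR (S k))
    by (intro k; exact (proj2_sig (Hsmall k))).
  destruct (bounded_vec_seq_subseq_cv n u 1) as [phi [l [Hphi Hl]]].
  { intros k i; rewrite <- (proj1 (Hu k)); apply Rabs_le_vsup. }
  assert (Hl0 : N l = 0).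
  { apply (UL_sequence (fun k => N (u (phi k)))); [exact (norm_vec_cv _ _ Hl)|].
    intros eps Heps; destruct (archimed_cor1 eps Heps) as [K [HK HK0]].
    exists K; intros k Hk; unfold R_dist; rewrite Rminus_0_r, Rabs_pos_eq by apply N0.
    eapply Rlt_trans; [apply Hu|].
    apply (Rinv_INR_S_le_lt eps K); [exact HK0|exact HK|].
    pose proof (strictly_increasing_ge _ Hphi k); lia. }
  destruct (Hl (1 / 2)) as [K HK]; [lra|].
  assert (Hsup : vsup n (u (phi K)) <= 1 / 2).
  { apply vsup_le; [lra|intro i].
    specialize (HK K (le_n K) i); rewrite (Ndef l Hl0 i) in HK; unfold vzero in HK.
    rewrite Rminus_0_r in HK; lra. }
  rewrite (proj1 (Hu (phi K))) in Hsup; lra.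
Qed.

End NormEquivalence.

Lemma quasi_state_homogeneous {n m} (s : SemidirectLie n m) (zeta : gel n m -> R) :
  lie_quasi_state s zeta -> forall t x, zeta (gscal t x) = t * zeta x.
Proof.
  intros Hq t x.
  assert (E : gadd (gscal t x) (gscal 0 x) = gscal t x).
  { destruct x as [v X]; unfold gadd, gscal; simpl.
    f_equal; extensionality i; unfold vadd, vscal; ring. }
  rewrite <- E, (Hq t 0 x x); [ring|].
  split; intro i; unfold gbr; simpl.
  - unfold vadd, vscal, vzero; ring.
  - apply hbr_alt.
Qed.

(* Compactness of [[-1,1]^n x {0}] upgrades continuity at its points to a uniform statement. *)
Lemma continuous_small_near_cube {n m} (zeta : gel n m -> R) :
  g_continuous zeta -> (forall v, zeta (v, vzero) = 0) ->
  forall eps, 0 < eps -> exists delta, 0 < delta /\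
    forall u Y, (forall i, Rabs (u i) <= 1) -> (forall j, Rabs (Y j) < delta) ->
      Rabs (zeta (u, Y)) < eps.
Proof.
  intros Hc Hzero eps Heps; apply NNPP; intro Hno.
  assert (Hbad : forall k : nat, {x : gel n m | (forall i, Rabs (fst x i) <= 1) /\
            (forall j, Rabs (snd x j) < / INR (S k)) /\ eps <= Rabs (zeta x)}).
  { intro k; apply constructive_indefinite_description; apply NNPP; intro Hk; apply Hno.
    exists (/ INR (S k)); split; [apply Rinv_0_lt_compat, lt_0_INR; lia|].
    intros u Y Hu HY; apply Rnot_le_lt; intro Hz; apply Hk; exists (u, Y); auto. }
  set (x := fun k => proj1_sig (Hbad k)).
  assert (Hx : forall k, (forall i, Rabs (fst (x k) i) <= 1) /\
            (forall j, Rabs (snd (x k) j) < / INR (S k)) /\ eps <= Rabs (zeta (x k)))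
    by (intro k; exact (proj2_sig (Hbad k))).
  destruct (bounded_vec_seq_subseq_cv n (fun k => fst (x k)) 1) as [phi [l [Hphi Hl]]].
  { intro k; apply Hx. }
  destruct (Hc (l, vzero) eps Heps) as [delta [Hd Hdelta]].
  destruct (Hl delta Hd) as [K1 HK1].
  destruct (archimed_cor1 delta Hd) as [K2 [HK2 HK20]].
  set (k := phi (max K1 K2)).
  assert (Hk : (K2 <= k)%nat)
    by (pose proof (strictly_increasing_ge _ Hphi (max K1 K2)); unfold k; lia).
  destruct (Hx k) as [_ [HY Hz]].
  assert (Hclose : Rabs (zeta (x k) - zeta (l, vzero)) < eps).
  { apply Hdelta.
    - exact (HK1 (max K1 K2) (Nat.le_max_l _ _)).
    - intro j; unfold vzero; simpl; rewrite Rminus_0_r.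
      eapply Rlt_trans; [apply HY|exact (Rinv_INR_S_le_lt delta K2 k HK20 HK2 Hk)]. }
  rewrite Hzero, Rminus_0_r in Hclose; lra.
Qed.

Lemma quasi_state_rescale {n m} (s : SemidirectLie n m) (zeta : gel n m -> R) :
  lie_quasi_state s zeta -> forall v X t, t <> 0 ->
  zeta (v, X) = t * zeta (vscal (/ t) v, vscal (/ t) X).
Proof.
  intros Hq v X t Ht; rewrite <- (quasi_state_homogeneous s zeta Hq).
  f_equal; unfold gscal, vscal; simpl; f_equal; extensionality i; field; exact Ht.
Qed.

Lemma Rabs_scal_inv_le (t a b : R) : 0 < t -> Rabs a <= b -> Rabs (/ t * a) <= b / t.
Proof.
  intros Ht Hab; rewrite Rabs_mult, Rabs_pos_eq by (left; apply Rinv_0_lt_compat, Ht).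
  unfold Rdiv; rewrite Rmult_comm; apply Rmult_le_compat_r; [left; apply Rinv_0_lt_compat|]; lra.
Qed.

Lemma Rabs_mult_div_lt (t z c a eps : R) :
  0 < t -> 0 < c -> c * t <= a -> Rabs z < eps * c -> Rabs (t * z / a) < eps.
Proof.
  intros Ht Hc Ha Hz; assert (Ha0 : 0 < a) by nra.
  unfold Rdiv; rewrite !Rabs_mult, Rabs_inv, (Rabs_pos_eq t), (Rabs_pos_eq a) by lra.
  apply Rmult_lt_reg_r with a; [exact Ha0|].
  replace (t * Rabs z * / a * a) with (t * Rabs z) by (field; lra).
  assert (Heps : 0 < eps) by (pose proof (Rabs_pos z); nra).
  nra.
Qed.

Theorem mainTheorem8 (n m : nat) (s : SemidirectLie n m) (zeta : gel n m -> R) :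
  lie_quasi_state s zeta -> g_continuous zeta -> normalized zeta ->
  forall (X : vec m) (N : vec n -> R), is_norm N ->
    lim_ratio_infty_zero N (fun v => zeta (v, X)).
Proof.
  intros Hq Hc [HV _] X N HN eps Heps.
  pose proof HN as [N0 [_ [Nscal Nadd]]].
  destruct (norm_le_vsup n N N0 Nscal Nadd) as [C [HC0 HC]].
  destruct (vsup_le_norm n N HN) as [c [Hc0 HcN]].
  destruct (continuous_small_near_cube zeta Hc HV (eps * c)) as [delta [Hd Hsmall]]; [nra|].
  pose proof (vsup_ge0 m X) as HX0.
  exists (C * vsup m X / delta); intros v Hv.
  set (t := vsup n v).
  assert (HXt : vsup m X < delta * t).
  { assert (C * vsup m X < C * (delta * t)); [|nra].
    apply Rmult_lt_reg_l with (/ delta); [apply Rinv_0_lt_compat, Hd|].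
    replace (/ delta * (C * (delta * t))) with (C * t) by (field; lra).
    pose proof (HC v) as HCv; fold t in HCv; unfold Rdiv in Hv; lra. }
  assert (Ht : 0 < t) by nra.
  assert (Hz : Rabs (zeta (vscal (/ t) v, vscal (/ t) X)) < eps * c).
  { apply Hsmall; intro i; unfold vscal.
    - eapply Rle_trans; [apply (Rabs_scal_inv_le t _ t Ht), Rabs_le_vsup|].
      right; field; lra.
    - eapply Rle_lt_trans; [apply (Rabs_scal_inv_le t _ (vsup m X) Ht), Rabs_le_vsup|].
      apply Rmult_lt_reg_l with t; [exact Ht|].
      replace (t * (vsup m X / t)) with (vsup m X) by (field; lra); lra. }
  rewrite (quasi_state_rescale s zeta Hq v X t) by lra.
  exact (Rabs_mult_div_lt t _ c (N v) eps Ht Hc0 (HcN v) Hz).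
Qed.
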